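(* In the standing setting, let $(A,B,R,\sigma)$ be a context with associated Boolean relation $R^B$. For all $X\subseteq B$ and $Y\subseteq A$, $$(\chi_X)^{\uparrow_N}=\chi_{X^{\uparrow_N}}\qquad\text{and}\qquad (\chi_Y)^{\downarrow^N}=\chi_{Y^{\downarrow^N}},$$ where on the left the fuzzy necessity operators are applied and on the right the crisp ones.
   Context: Adjoint triple: for posets $(P_1,\le_1),(P_2,\le_2),(P_3,\le_3)$, maps $\&\colon P_1\times P_2\to P_3$, $\swarrow\colon P_3\times P_2\to P_1$, $\nwarrow\colon P_3\times P_1\to P_2$ with $x\le_1 z\swarrow y \iff x\,\&\,y\le_3 z \iff y\le_2 z\nwarrow x$ for all $x,y,z$. For lower-bounded posets, $\&$ has zero-divisors if there are $x\ne\bot_1$, $y\neq\bot_2$ with $x\,\&\,y=\bot_3$. Standing setting: $(L_1,\preceq_1,\bot_1,\top_1)$ and $(L_2,\preceq_2,\bot_2,\top_2)$ are complete lattices and $(P,\le,\bot,\top)$ is a bounded poset. A multi-adjoint frame consists of adjoint triples $(\&_i,\swarrow^i,\nwarrow_i)$, $i=1,\dots,n$, with respect to $L_1,L_2,P$; a property-oriented frame consists of adjoint triples $(\&^p_j,\swarrow_p^j,\nwarrow^p_j)$, $j=1,\dots,m$, with respect to $P,L_2,L_1$; an object-oriented frame consists of adjoint triples $(\&^o_k,\swarrow_o^k,\nwarrow^o_k)$, $k=1,\dots,s$, with respect to $L_1,P,L_2$. All conjunctors $\&_i,\&^p_j,\&^o_k$ have no zero-divisors. A context $(A,B,R,\sigma)$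 consists of non-empty sets $A,B$, $R\colon A\times B\to P$, and maps $\sigma,\sigma_p,\sigma_o$ from $A\times B$ to the index sets of the three frames. Fuzzy necessity operators: $g^{\uparrow_N}(a)=\inf\{g(b)\swarrow_o^{\sigma_o(a,b)}R(a,b)\mid b\in B\}$ for $g\in L_2^B$, and $f^{\downarrow^N}(b)=\inf\{f(a)\nwarrow^p_{\sigma_p(a,b)}R(a,b)\mid a\in A\}$ for $f\in L_1^A$. Associated Boolean context $(A,B,R^B)$: $R^B(a,b)=1$ if $R(a,b)\ne\bot$ and $0$ otherwise. Crisp necessity operators: for $X\subseteq B$, $X^{\uparrow_N}=\{a\in A\mid \forall b\in B,\ R^B(a,b)=1\Rightarrow b\in X\}$; for $Y\subseteq A$, $Y^{\downarrow^N}=\{b\in B\mid\forall a\in A,\ R^B(a,b)=1\Rightarrow a\in Y\}$. For $X\subseteq B$, $\chi_X\in L_2^B$ takes value $\top_2$ on $X$ and $\bot_2$ elsewhere; for $Y\subseteq A$, $\chi_Y\in L_1^A$ takes value $\top_1$ on $Y$ and $\bot_1$ elsewhere. *)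

From Stdlib Require Import ClassicalEpsilon.
From mathcomp Require Import ssreflect ssrfun ssrbool eqtype ssrnat fintype.

Set Implicit Arguments.
Unset Strict Implicit.

(* A complete lattice: a partial order in which every subset has an infimum
   (hence also every supremum).  Bottom = inf of everything, top = inf of the
   empty set. *)
Record CompleteLattice := {
  cl_car :> Type;
  cl_le : cl_car -> cl_car -> Prop;
  cl_refl : forall x, cl_le x x;
  cl_antisym : forall x y, cl_le x y -> cl_le y x -> x = y;
  cl_trans : forall x y z, cl_le x y -> cl_le y z -> cl_le x z;
  cl_inf : (cl_car -> Prop) -> cl_car;
  cl_inf_lb : forall (S : cl_car -> Prop) x, S x -> cl_le (cl_inf S) x;
  cl_inf_glb : forall (S : cl_car -> Prop) y,
      (forall x, S x -> cl_le y x) -> cl_le y (cl_inf S)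
}.

Definition cl_bot (L : CompleteLattice) : L := @cl_inf L (fun _ => True).
Definition cl_top (L : CompleteLattice) : L := @cl_inf L (fun _ => False).

Record BoundedPoset := {
  bp_car :> Type;
  bp_le : bp_car -> bp_car -> Prop;
  bp_refl : forall x, bp_le x x;
  bp_antisym : forall x y, bp_le x y -> bp_le y x -> x = y;
  bp_trans : forall x y z, bp_le x y -> bp_le y z -> bp_le x z;
  bp_bot : bp_car;
  bp_top : bp_car;
  bp_bot_least : forall x, bp_le bp_bot x;
  bp_top_greatest : forall x, bp_le x bp_top
}.

(* Adjoint triple w.r.t. posets (P1,le1), (P2,le2), (P3,le3):
   conj : P1 -> P2 -> P3, lres (swarrow) : P3 -> P2 -> P1,
   rres (nwarrow) : P3 -> P1 -> P2. *)
Definition adjoint_triple (P1 P2 P3 : Type)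
  (le1 : P1 -> P1 -> Prop) (le2 : P2 -> P2 -> Prop) (le3 : P3 -> P3 -> Prop)
  (conj : P1 -> P2 -> P3) (lres : P3 -> P2 -> P1) (rres : P3 -> P1 -> P2) : Prop :=
  forall x y z,
    (le1 x (lres z y) <-> le3 (conj x y) z) /\
    (le3 (conj x y) z <-> le2 y (rres z x)).

Definition no_zero_divisors (P1 P2 P3 : Type) (bot1 : P1) (bot2 : P2) (bot3 : P3)
  (conj : P1 -> P2 -> P3) : Prop :=
  forall x y, x <> bot1 -> y <> bot2 -> conj x y <> bot3.

(* Fuzzy necessity operators.
   lres_o k : L2 -> P -> L1 (object-oriented implications swarrow_o^k),
   rres_p j : L1 -> P -> L2 (property-oriented implications nwarrow^p_j). *)
Definition fuzzy_up_N (L1 L2 : CompleteLattice) (P : BoundedPoset)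
  (A B : Type) (s : nat) (R : A -> B -> P) (sigma_o : A -> B -> 'I_s)
  (lres_o : 'I_s -> L2 -> P -> L1) (g : B -> L2) : A -> L1 :=
  fun a => @cl_inf L1 (fun x => exists b, x = lres_o (sigma_o a b) (g b) (R a b)).

Definition fuzzy_down_N (L1 L2 : CompleteLattice) (P : BoundedPoset)
  (A B : Type) (m : nat) (R : A -> B -> P) (sigma_p : A -> B -> 'I_m)
  (rres_p : 'I_m -> L1 -> P -> L2) (f : A -> L1) : B -> L2 :=
  fun b => @cl_inf L2 (fun y => exists a, y = rres_p (sigma_p a b) (f a) (R a b)).

Definition RB (P : BoundedPoset) (A B : Type) (R : A -> B -> P) (a : A) (b : B) : bool :=
  if excluded_middle_informative (R a b <> bp_bot P) then true else false.

Definition crisp_up_N (P : BoundedPoset) (A B : Type) (R : A -> B -> P)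
  (X : B -> Prop) : A -> Prop :=
  fun a => forall b, RB R a b = true -> X b.

Definition crisp_down_N (P : BoundedPoset) (A B : Type) (R : A -> B -> P)
  (Y : A -> Prop) : B -> Prop :=
  fun b => forall a, RB R a b = true -> Y a.

Definition chi (L : CompleteLattice) (T : Type) (X : T -> Prop) : T -> L :=
  fun t => if excluded_middle_informative (X t) then cl_top L else cl_bot L.

(** The fuzzy necessity operator at [a] is the infimum of the residua
    [chi X b ↙ R(a,b)].  For an adjoint triple such a residuum is [top] when its
    first argument is [top] or its second is [bot]; it is [bot] when its first
    argument is [bot] and its second is not, because [x & y <= bot] forces
    [x = bot] in the absence of zero-divisors.  So the infimum is [top] exactly
    when every [b] with [R(a,b) <> bot] lies in [X], i.e. when [a] lies in the
    crisp necessity of [X].  The second equality is the first one for the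
    transposed relation and the transposed property-oriented triples. *)

From Stdlib Require Import Classical ClassicalEpsilon FunctionalExtensionality.
From mathcomp Require Import ssreflect fintype.

Lemma cl_bot_le (L : CompleteLattice) (x : L) : cl_le (cl_bot L) x.
Proof. exact: cl_inf_lb. Qed.

Lemma cl_le_top (L : CompleteLattice) (x : L) : cl_le x (cl_top L).
Proof. exact: cl_inf_glb. Qed.

Lemma cl_top_le_eq (L : CompleteLattice) (x : L) :
  cl_le (cl_top L) x -> x = cl_top L.
Proof. by move=> topx; apply: cl_antisym => //; apply: cl_le_top. Qed.

Lemma cl_le_bot_eq (L : CompleteLattice) (x : L) :
  cl_le x (cl_bot L) -> x = cl_bot L.
Proof. by move=> xbot; apply: cl_antisym => //; apply: cl_bot_le. Qed.

Lemma cl_inf_eq_top (L : CompleteLattice) (S : L -> Prop) :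
  (forall x, S x -> x = cl_top L) -> cl_inf S = cl_top L.
Proof.
move=> Stop; apply: cl_top_le_eq; apply: cl_inf_glb => x /Stop ->.
exact: cl_refl.
Qed.

Lemma cl_inf_eq_bot (L : CompleteLattice) (S : L -> Prop) :
  S (cl_bot L) -> cl_inf S = cl_bot L.
Proof. by move=> Sbot; apply: cl_le_bot_eq; apply: cl_inf_lb. Qed.

Lemma chi_in (L : CompleteLattice) {T : Type} {X : T -> Prop} {t : T} :
  X t -> chi L X t = cl_top L.
Proof. by rewrite /chi; case: excluded_middle_informative. Qed.

Lemma chi_notin (L : CompleteLattice) {T : Type} {X : T -> Prop} {t : T} :
  ~ X t -> chi L X t = cl_bot L.
Proof. by rewrite /chi; case: excluded_middle_informative. Qed.

Lemma RBP (P : BoundedPoset) (A B : Type) (R : A -> B -> P) a b :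
  RB R a b = true <-> R a b <> bp_bot P.
Proof. by rewrite /RB; case: excluded_middle_informative. Qed.

Lemma adjoint_triple_flip {P1 P2 P3 : Type} {le1 le2 le3}
    {conj : P1 -> P2 -> P3} {lres : P3 -> P2 -> P1} {rres : P3 -> P1 -> P2} :
  adjoint_triple le1 le2 le3 conj lres rres ->
  adjoint_triple le2 le1 le3 (fun y x => conj x y) rres lres.
Proof. by move=> adj y x z; case: (adj x y z) => -> ->. Qed.

Lemma no_zero_divisors_flip {P1 P2 P3 : Type} {bot1 : P1} {bot2 : P2} {bot3 : P3}
    {conj : P1 -> P2 -> P3} :
  no_zero_divisors bot1 bot2 bot3 conj ->
  no_zero_divisors bot2 bot1 bot3 (fun y x => conj x y).
Proof. by move=> nz y x y0 x0; apply: nz. Qed.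

Section AdjointResiduum.

Context {L1 L2 : CompleteLattice} {P : BoundedPoset}.
Context {conj : L1 -> P -> L2} {lres : L2 -> P -> L1} {rres : L2 -> L1 -> P}.
Hypothesis adj : adjoint_triple (@cl_le L1) (@bp_le P) (@cl_le L2) conj lres rres.

Lemma lres_top_l y : lres (cl_top L2) y = cl_top L1.
Proof. by apply: cl_top_le_eq; apply/(proj1 (adj _ _ _)); apply: cl_le_top. Qed.

Lemma lres_bot_r z : lres z (bp_bot P) = cl_top L1.
Proof.
apply: cl_top_le_eq; apply/(proj1 (adj _ _ _)); apply/(proj2 (adj _ _ _)).
exact: bp_bot_least.
Qed.

Lemma lres_bot_l y :
  no_zero_divisors (cl_bot L1) (bp_bot P) (cl_bot L2) conj ->
  y <> bp_bot P -> lres (cl_bot L2) y = cl_bot L1.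
Proof.
move=> nz ybot; apply: NNPP => lres_bot.
have conj_bot : conj (lres (cl_bot L2) y) y = cl_bot L2.
  by apply: cl_le_bot_eq; apply/(proj1 (adj _ _ _)); apply: cl_refl.
exact: nz lres_bot ybot conj_bot.
Qed.

End AdjointResiduum.

Lemma fuzzy_up_N_chi (L1 L2 : CompleteLattice) (P : BoundedPoset)
    (s : nat) (conj_o : 'I_s -> L1 -> P -> L2)
    (lres_o : 'I_s -> L2 -> P -> L1) (rres_o : 'I_s -> L2 -> L1 -> P)
    (adj : forall k, adjoint_triple (@cl_le L1) (@bp_le P) (@cl_le L2)
                       (conj_o k) (lres_o k) (rres_o k))
    (nz : forall k, no_zero_divisors (cl_bot L1) (bp_bot P) (cl_bot L2) (conj_o k))
    (A B : Type) (R : A -> B -> P) (sigma_o : A -> B -> 'I_s) (X : B -> Prop) :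
  fuzzy_up_N R sigma_o lres_o (chi L2 X) = chi L1 (crisp_up_N R X).
Proof.
apply: functional_extensionality => a.
have [Xup | notXup] := classic (crisp_up_N R X a).
- rewrite (chi_in _ Xup); apply: cl_inf_eq_top => _ [b ->].
  have [Xb | notXb] := classic (X b).
    by rewrite (chi_in _ Xb) (lres_top_l (adj _)).
  have -> : R a b = bp_bot P.
    by apply: NNPP => Rab; apply/notXb/Xup/RBP.
  exact: (lres_bot_r (adj _)).
- rewrite (chi_notin _ notXup).
  have [b /RBP Rab notXb] : exists2 b, RB R a b = true & ~ X b.
    apply: NNPP => none; apply: notXup => b Rab.
    by apply: NNPP => notXb; apply: none; exists b.
  apply: cl_inf_eq_bot; exists b.
  by rewrite (chi_notin _ notXb) (lres_bot_l (adj _)).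
Qed.

Lemma fuzzy_down_N_chi (L1 L2 : CompleteLattice) (P : BoundedPoset)
    (m : nat) (conj_p : 'I_m -> P -> L2 -> L1)
    (lres_p : 'I_m -> L1 -> L2 -> P) (rres_p : 'I_m -> L1 -> P -> L2)
    (adj : forall j, adjoint_triple (@bp_le P) (@cl_le L2) (@cl_le L1)
                       (conj_p j) (lres_p j) (rres_p j))
    (nz : forall j, no_zero_divisors (bp_bot P) (cl_bot L2) (cl_bot L1) (conj_p j))
    (A B : Type) (R : A -> B -> P) (sigma_p : A -> B -> 'I_m) (Y : A -> Prop) :
  fuzzy_down_N R sigma_p rres_p (chi L1 Y) = chi L2 (crisp_down_N R Y).
Proof.
exact: (@fuzzy_up_N_chi L2 L1 P m (fun j y x => conj_p j x y) rres_p lres_p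
          (fun j => adjoint_triple_flip (adj j))
          (fun j => no_zero_divisors_flip (nz j))
          B A (fun b a => R a b) (fun b a => sigma_p a b) Y).
Qed.

Theorem mainTheorem3
  (L1 L2 : CompleteLattice) (P : BoundedPoset)
  (n : nat) (conj : 'I_n -> L1 -> L2 -> P)
  (lres : 'I_n -> P -> L2 -> L1) (rres : 'I_n -> P -> L1 -> L2)
  (Hadj : forall i, adjoint_triple (@cl_le L1) (@cl_le L2) (@bp_le P)
                      (conj i) (lres i) (rres i))
  (Hnz : forall i, no_zero_divisors (cl_bot L1) (cl_bot L2) (bp_bot P) (conj i))
  (m : nat) (conj_p : 'I_m -> P -> L2 -> L1)
  (lres_p : 'I_m -> L1 -> L2 -> P) (rres_p : 'I_m -> L1 -> P -> L2)
  (Hadj_p : forall j, adjoint_triple (@bp_le P) (@cl_le L2) (@cl_le L1)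
                        (conj_p j) (lres_p j) (rres_p j))
  (Hnz_p : forall j, no_zero_divisors (bp_bot P) (cl_bot L2) (cl_bot L1) (conj_p j))
  (s : nat) (conj_o : 'I_s -> L1 -> P -> L2)
  (lres_o : 'I_s -> L2 -> P -> L1) (rres_o : 'I_s -> L2 -> L1 -> P)
  (Hadj_o : forall k, adjoint_triple (@cl_le L1) (@bp_le P) (@cl_le L2)
                        (conj_o k) (lres_o k) (rres_o k))
  (Hnz_o : forall k, no_zero_divisors (cl_bot L1) (bp_bot P) (cl_bot L2) (conj_o k))
  (A B : Type) (hA : inhabited A) (hB : inhabited B) (R : A -> B -> P)
  (sigma : A -> B -> 'I_n) (sigma_p : A -> B -> 'I_m) (sigma_o : A -> B -> 'I_s)
  (X : B -> Prop) (Y : A -> Prop) :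
  fuzzy_up_N R sigma_o lres_o (chi L2 X) = chi L1 (crisp_up_N R X) /\
  fuzzy_down_N R sigma_p rres_p (chi L1 Y) = chi L2 (crisp_down_N R Y).
Proof.
split; [exact: fuzzy_up_N_chi | exact: fuzzy_down_N_chi].
Qed.
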